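(* Let $G=(\mathcal{V},\mathcal{E})$ be a directed graph on $n$ nodes, let $f\ge0$, and let $\mathbf{A}\in\mathbb{R}^{k\times n}$ be an assignment matrix. If for every $\mathcal{F}\subseteq\mathcal{V}$ with $|\mathcal{F}|\le f$, every reduced graph of $G$ with respect to $\mathcal{F}$ contains a source component with at least $\max\{f+1,sp(\mathbf{A})\}$ nodes, then $n\ge\max\{sp(\mathbf{A})+2f,\,3f+1\}$.
   Context: An assignment matrix $\mathbf{A}\in\mathbb{R}^{k\times n}$ has nonnegative entries with each column summing to $1$. Its sparsity parameter $sp(\mathbf{A})$ is the smallest integer $s$ such that the sum of any $s$ columns of $\mathbf{A}$ is component-wise positive ($sp(\mathbf{A})=n+1$ if the sum of all columns is not component-wise positive). The directed graph $G$ has no self-loops. Reduced graph: for a set $\mathcal{F}$ with $|\mathcal{F}|\le f$, a subgraph of $G$ obtained by removing all nodes in $\mathcal{F}$ together with their edges and then removing up to $f$ additional incoming edges at each remaining node. A source component of a directed graph is the set of its nodes each of which has a directed path to every other node of that graph. *)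

From mathcomp Require Import all_boot all_order all_algebra.
Set Implicit Arguments. Unset Strict Implicit. Unset Printing Implicit Defensive.
Import Order.TTheory GRing.Theory Num.Theory.
Local Open Scope ring_scope.

Definition assignment_matrix (R : realFieldType) (k n : nat) (A : 'M[R]_(k, n)) : Prop :=
  (forall i j, 0 <= A i j) /\ (forall j, \sum_(i < k) A i j = 1).

Definition sp_good (R : realFieldType) (k n : nat) (A : 'M[R]_(k, n)) (s : nat) : bool :=
  [forall S : {set 'I_n}, (#|S| == s)%N ==> [forall i : 'I_k, 0 < \sum_(j in S) A i j]].

(* sp(A): the smallest s in {0..n} with sp_good s, or n+1 if none exists
   (note: sp_good n fails iff the sum of all columns is not component-wise positive). *)
Definition sp (R : realFieldType) (k n : nat) (A : 'M[R]_(k, n)) : nat :=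
  find (sp_good A) (iota 0 n.+1).

(* h is a reduced graph of the directed graph e (edge x -> y iff e x y) w.r.t. F:
   nodes of F are removed with all their edges, and then at each remaining node
   at most f incoming edges are removed. The reduced graph has node set ~: F. *)
Definition reduced_graph (n : nat) (e : rel 'I_n) (f : nat) (F : {set 'I_n})
    (h : rel 'I_n) : Prop :=
  (forall x y, h x y -> [/\ x \notin F, y \notin F & e x y]) /\
  (forall y, y \notin F ->
     (#|[set x | (x \notin F) && e x y && ~~ h x y]| <= f)%N).

Definition source_component (n : nat) (F : {set 'I_n}) (h : rel 'I_n) : {set 'I_n} :=
  [set v | (v \notin F) && [forall w, (w \notin F) ==> connect h v w]].

From mathcomp Require Import all_boot all_order all_algebra.
From mathcomp Require Import zify.
Import Order.TTheory GRing.Theory Num.Theory.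
Set Implicit Arguments. Unset Strict Implicit. Unset Printing Implicit Defensive.
Local Open Scope ring_scope.

(* Let F be f nodes and D a set of 2f nodes containing F. Removing F and then
   every edge leaving D yields a reduced graph, since each surviving node loses
   only the incoming edges from D \ F. A node of D then has no out-neighbours,
   so it lies in a source component only if that component is a singleton.
   Hence a source component with at least max(f + 1, sp A) nodes, when f > 0,
   lies outside D, and max(f + 1, sp A) <= n - 2f. *)

Lemma card_ord_lt (n b : nat) : #|[set i : 'I_n | (i < b)%N]| = minn b n.
Proof.
rewrite cardsE -sum1_card (big_mkcond (fun i : 'I_n => i < b)%N) /=.
rewrite -(big_mkord xpredT (fun i => if (i < b)%N then 1%N else 0%N)).
elim: n => [|n IHn]; first by rewrite big_geq // minn0.
by rewrite big_nat_recr //= IHn; case: ltnP => ?; lia.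
Qed.

Lemma source_component_sink (n : nat) (F : {set 'I_n}) (h : rel 'I_n) (v : 'I_n) :
  (forall w, ~~ h v w) -> v \in source_component F h ->
  source_component F h \subset [set v].
Proof.
move=> sink_v; rewrite inE => /andP [_ /forallP reach_v].
apply/subsetP => w; rewrite !inE => /andP [wF _].
move: (reach_v w); rewrite wF /= => /connectP [[|x p] /=]; first by move=> _ ->.
by rewrite (negbTE (sink_v x)).
Qed.

Definition cut_graph (n : nat) (e : rel 'I_n) (D F : {set 'I_n}) : rel 'I_n :=
  [rel x y | [&& e x y, x \notin D & y \notin F]].

Lemma reduced_cut_graph (n f : nat) (e : rel 'I_n) (D F : {set 'I_n}) :
  F \subset D -> (#|D :\: F| <= f)%N -> reduced_graph e f F (cut_graph e D F).
Proof.
move=> FD DF_le; split=> [x y /and3P [exy xD yF] | y yF].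
  by split=> //; apply: contra xD; apply/subsetP.
apply: leq_trans DF_le; apply: subset_leq_card; apply/subsetP => x.
rewrite !inE /cut_graph /= yF andbT => /andP [/andP [-> exy]].
by rewrite exy /= negbK.
Qed.

Lemma card_source_component_cut_graph (n : nat) (e : rel 'I_n) (D F : {set 'I_n}) :
  (#|source_component F (cut_graph e D F)| <= maxn 1 #|~: D|)%N.
Proof.
case: (boolP (source_component F (cut_graph e D F) \subset ~: D)) => [sc_notD|].
  exact: leq_trans (subset_leq_card sc_notD) (leq_maxr _ _).
case/subsetPn => v v_sc; rewrite inE negbK => vD.
have sink_v : forall w, ~~ cut_graph e D F v w by move=> w; rewrite /cut_graph /= vD andbF.
rewrite -(cards1 v) (leq_trans _ (leq_maxl _ _)) //.
exact: subset_leq_card (source_component_sink sink_v v_sc).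
Qed.

Theorem corollary1 (R : realFieldType) (n k f : nat) (e : rel 'I_n)
    (A : 'M[R]_(k, n)) :
  irreflexive e ->
  assignment_matrix A ->
  (forall (F : {set 'I_n}) (h : rel 'I_n),
     (#|F| <= f)%N -> reduced_graph e f F h ->
     (maxn f.+1 (sp A) <= #|source_component F h|)%N) ->
  (maxn (sp A + 2 * f) (3 * f + 1) <= n)%N.
Proof.
move=> _ _ source_large.
set F := [set i : 'I_n | (i < f)%N]; set D := [set i : 'I_n | (i < 2 * f)%N].
have cardF : #|F| = minn f n := card_ord_lt n f.
have cardD : #|D| = minn (2 * f) n := card_ord_lt n (2 * f).
have FD : F \subset D by apply/subsetP => i; rewrite !inE; lia.
have cardDF : #|D :\: F| = (#|D| - #|F|)%N by rewrite cardsD (setIidPr FD).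
have cardCD : #|~: D| = (n - #|D|)%N by rewrite cardsCs setCK card_ord.
have F_le : (#|F| <= f)%N by rewrite cardF geq_minl.
have DF_le : (#|D :\: F| <= f)%N by rewrite cardDF cardD cardF; lia.
have := source_large F _ F_le (reduced_cut_graph e FD DF_le).
have sc_le_n : (#|source_component F (cut_graph e D F)| <= n)%N.
  by rewrite -[X in (_ <= X)%N]card_ord max_card.
have := card_source_component_cut_graph e D F.
rewrite cardCD cardD; lia.
Qed.
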